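(* In the setting of the context, consider any sample path. Then for any integer $t_0\ge 0$ and any vector $\tilde Q_{t_0}$, the sequence $\{\hat Q_t\}$ is bounded below if and only if the sequence $\{\tilde Q_t\}$ defined from $t_0$ and $\tilde Q_{t_0}$ is bounded below.
   Context: Finite-space game: $S=\{1,\dots,n\}$, $S_o=S\cup\{0\}$, $0$ an absorbing termination state; at $i\in S$ players I and II have finite control sets $U(i),V(i)$; under $(u,v)$ transition to $j\in S_o$ w.p. $p_{ij}(u,v)$ with real transition cost $\hat g(i,u,v,j)$. $R=\{(i,u,v):i\in S,u\in U(i),v\in V(i)\}$; $U(0)=V(0)=\{0\}$, and all Q-factor vectors are indexed by $R\cup\{(0,0,0)\}$ with value $0$ at $(0,0,0)$. Fix a stationary randomized policy $\bar\nu$ of player II and write $\bar\nu_s=\bar\nu(\cdot\mid s)\in\mathcal P(V(s))$ (point mass at $0$ for $s=0$). For a vector $Q$, state $s$, $\tilde u\in U(s)$: $\underline Q(s,\tilde u,\bar\nu_s)=\sum_{\tilde v\in V(s)}\bar\nu_s(\tilde v)Q(s,\tilde u,\tilde v)$. Random variables (fixed along a sample path): stepsizes $\gamma_{t,\ell}\in[0,1]$, delays $0\le\tau_{\ell\tilde\ell}(t)\le t$, successors $j_t^\ell\in S_o$ for $\ell,\tilde\ell\in R$, $t\ge0$, and $\hat Q_0$. For any vector sequence $\{X_t\}$ write $X^{(\ell)}_t(\tilde\ell)=X_{\tau_{\ell\tilde\ell}(t)}(\tilde\ell)$. The sequence $\{\hat Q_t\}$ satisfies, for $\ell=(i,u,v)\in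 R$ and $s=j_t^\ell$: $\hat Q_{t+1}(i,u,v)=(1-\gamma_{t,\ell})\hat Q_t(i,u,v)+\gamma_{t,\ell}(\hat g(i,u,v,s)+\underline{\hat Q}^{(\ell)}_t(s,u_t^\ell,\bar\nu_s))$, where $u_t^\ell\in\arg\min_{\tilde u\in U(s)}\underline{\hat Q}^{(\ell)}_t(s,\tilde u,\bar\nu_s)$. Given an integer $t_0$ and a vector $\tilde Q_{t_0}$, the sequence $\{\tilde Q_t\}$ is defined by $\tilde Q_t=\tilde Q_{t_0}$ for $t\le t_0$ and, for $t\ge t_0$, $\tilde Q_{t+1}(i,u,v)=(1-\gamma_{t,\ell})\tilde Q_t(i,u,v)+\gamma_{t,\ell}(\hat g(i,u,v,s)+\underline{\tilde Q}^{(\ell)}_t(s,u_t^\ell,\bar\nu_s))$, using the same $\gamma_{t,\ell}$, $j_t^\ell$, $u_t^\ell$, $\tau_{\ell\tilde\ell}(t)$. *)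

(* States S_o = 'I_n.+1 with ord0 the termination state 0,
   S = {1,...,n} = the nonzero ordinals.  Controls of player I live in a
   finType TU, controls of player II in a finType TV; U i : {set TU} and
   V i : {set TV} are the finite control sets at state i. *)
From mathcomp Require Import all_boot all_order all_algebra.
From mathcomp Require Import reals.
Set Implicit Arguments. Unset Strict Implicit. Unset Printing Implicit Defensive.
Import Order.TTheory GRing.Theory Num.Theory.
Local Open Scope ring_scope.

Definition trip (n : nat) (TU TV : finType) := ('I_n.+1 * TU * TV)%type.

Definition inR (n : nat) (TU TV : finType)
  (U : 'I_n.+1 -> {set TU}) (V : 'I_n.+1 -> {set TV}) (l : trip n TU TV) : bool :=
  [&& l.1.1 != ord0, l.1.2 \in U l.1.1 & l.2 \in V l.1.1].

(* underline Q (s, u, nu_s) = sum_{v in V(s)} nu_s(v) Q(s,u,v);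
   for s = 0 this is Q(0,0,0) = 0 (nu_0 is the point mass at 0). *)
Definition Qbar (R : realType) (n : nat) (TU TV : finType)
  (V : 'I_n.+1 -> {set TV}) (nu : 'I_n.+1 -> TV -> R)
  (Q : trip n TU TV -> R) (s : 'I_n.+1) (u : TU) : R :=
  if s == ord0 then 0 else \sum_(v in V s) nu s v * Q (s, u, v).

Definition delayed (R : realType) (n : nat) (TU TV : finType)
  (X : nat -> trip n TU TV -> R) (tau : trip n TU TV -> trip n TU TV -> nat -> nat)
  (l : trip n TU TV) (t : nat) : trip n TU TV -> R :=
  fun l' => X (tau l l' t) l'.

Definition bounded_below (R : realType) (n : nat) (TU TV : finType)
  (U : 'I_n.+1 -> {set TU}) (V : 'I_n.+1 -> {set TV})
  (X : nat -> trip n TU TV -> R) : Prop :=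
  exists c : R, forall t l, inR U V l -> c <= X t l.

(* Both sequences are driven by the same stepsizes, successors, delays and
   player-I controls, so their difference obeys a recursion that replaces it,
   at every step, by a convex combination of earlier differences (the stepsize
   interpolation and the nu-average in the successor state).  Hence the
   difference never exceeds its largest absolute value over the finitely many
   entries with time at most t0, and a uniform bound on the difference
   transfers lower bounds in both directions.  Neither the minimizing property
   of the controls nor the values of Qtil before t0 play any role. *)
From mathcomp Require Import all_boot all_order all_algebra.
From mathcomp Require Import reals.
From mathcomp Require Import ring.
Set Implicit Arguments. Unset Strict Implicit. Unset Printing Implicit Defensive.
Import Order.TTheory GRing.Theory Num.Theory.
Local Open Scope ring_scope.

Lemma ler_norm_convex_sum (R : numDomainType) (I : finType) (P : pred I)
    (w x : I -> R) (M : R) :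
  (forall i, P i -> 0 <= w i) -> \sum_(i | P i) w i = 1 ->
  (forall i, P i -> `|x i| <= M) -> `|\sum_(i | P i) w i * x i| <= M.
Proof.
move=> w_ge0 w_sum1 xM; rewrite -[M]mul1r -w_sum1 mulr_suml.
apply: le_trans (ler_norm_sum _ _ _) _; apply: ler_sum => i Pi.
by rewrite normrM ger0_norm ?w_ge0 // ler_wpM2l ?w_ge0 ?xM.
Qed.

Lemma ler_norm_interpolation (R : realDomainType) (a x y M : R) :
  0 <= a <= 1 -> `|x| <= M -> `|y| <= M -> `|(1 - a) * x + a * y| <= M.
Proof.
move=> /andP[a_ge0 a_le1] xM yM.
apply: le_trans (ler_normD _ _) _.
have one_sub_a_ge0 : 0 <= 1 - a by rewrite subr_ge0.
rewrite !normrM (ger0_norm a_ge0) (ger0_norm one_sub_a_ge0).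
apply: le_trans (lerD (ler_wpM2l one_sub_a_ge0 xM) (ler_wpM2l a_ge0 yM)) _.
by rewrite -mulrDl subrK mul1r.
Qed.

Lemma ler_norm_sum_initial (R : numDomainType) (I : finType)
    (F : nat -> I -> R) (t0 : nat) :
  exists2 M, 0 <= M & forall k i, (k <= t0)%N -> `|F k i| <= M.
Proof.
have ler_term (J : finType) (G : J -> R) j :
    (forall j', 0 <= G j') -> G j <= \sum_j' G j'.
  by move=> G_ge0; rewrite (bigD1 j) //= lerDl sumr_ge0.
exists (\sum_(k < t0.+1) \sum_i `|F k i|) => [|k i k_le].
  by apply: sumr_ge0 => k _; apply: sumr_ge0.
apply: le_trans (ler_term _ (fun k : 'I_t0.+1 => \sum_i `|F k i|)
                   (Ordinal (k_le : (k < t0.+1)%N)) _) => /=.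
  exact: ler_term (fun i => `|F k i|) i _.
by move=> k'; apply: sumr_ge0.
Qed.

Section AsynchronousIteration.

Variables (R : realType) (n : nat) (TU TV : finType).
Variables (U : 'I_n.+1 -> {set TU}) (V : 'I_n.+1 -> {set TV}).
Variable nu : 'I_n.+1 -> TV -> R.
Hypothesis nu_ge0 : forall (s : 'I_n.+1) v, s != ord0 -> v \in V s -> 0 <= nu s v.
Hypothesis nu_sum1 : forall s : 'I_n.+1, s != ord0 -> \sum_(v in V s) nu s v = 1.

Lemma Qbar_dist (Q1 Q2 : trip n TU TV -> R) (s : 'I_n.+1) (a : TU) (M : R) :
  0 <= M ->
  (forall v, s != ord0 -> v \in V s -> `|Q1 (s, a, v) - Q2 (s, a, v)| <= M) ->
  `|Qbar V nu Q1 s a - Qbar V nu Q2 s a| <= M.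
Proof.
move=> M_ge0 QM; rewrite /Qbar; case: eqP => [_|/eqP s0].
  by rewrite subrr normr0.
rewrite -sumrB; under eq_bigr do rewrite -mulrBr.
apply: ler_norm_convex_sum => [v||v]; by [apply: nu_ge0 | apply: nu_sum1 | apply: QM].
Qed.

Variables (g : trip n TU TV -> 'I_n.+1 -> R) (gamma : nat -> trip n TU TV -> R).
Hypothesis gamma_range : forall t l, inR U V l -> 0 <= gamma t l <= 1.
Variable tau : trip n TU TV -> trip n TU TV -> nat -> nat.
Hypothesis tau_le : forall l l' t, inR U V l -> inR U V l' -> (tau l l' t <= t)%N.
Variables (j : nat -> trip n TU TV -> 'I_n.+1) (u : nat -> trip n TU TV -> TU).
Hypothesis u_mem : forall t l, inR U V l -> j t l != ord0 -> u t l \in U (j t l).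

Definition iterates_from (t0 : nat) (X : nat -> trip n TU TV -> R) :=
  forall t l, (t0 <= t)%N -> inR U V l ->
    X t.+1 l = (1 - gamma t l) * X t l
      + gamma t l * (g l (j t l) + Qbar V nu (delayed X tau l t) (j t l) (u t l)).

Lemma iterates_dist_le (t0 : nat) (X Y : nat -> trip n TU TV -> R) (M : R) :
  iterates_from t0 X -> iterates_from t0 Y -> 0 <= M ->
  (forall k l, (k <= t0)%N -> inR U V l -> `|X k l - Y k l| <= M) ->
  forall t l, inR U V l -> `|X t l - Y t l| <= M.
Proof.
move=> itX itY M_ge0 init_le t l Rl.
suff dist_le_upto : forall k l, (k <= t)%N -> inR U V l -> `|X k l - Y k l| <= M.
  exact: dist_le_upto.
elim: t {l Rl} => [|t IH] k l k_le Rl.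
  exact: init_le (leq_trans k_le (leq0n t0)) Rl.
move: k_le; rewrite leq_eqVlt ltnS => /orP[/eqP->|k_le_t]; last exact: IH.
have [t_lt_t0|t0_le_t] := ltnP t t0; first exact: init_le.
have -> : X t.+1 l - Y t.+1 l = (1 - gamma t l) * (X t l - Y t l) + gamma t l *
    (Qbar V nu (delayed X tau l t) (j t l) (u t l)
     - Qbar V nu (delayed Y tau l t) (j t l) (u t l)).
  by rewrite itX // itY //; ring.
apply: ler_norm_interpolation; [exact: gamma_range | exact: IH |].
apply: Qbar_dist => // v j0 vV.
have Rjuv : inR U V (j t l, u t l, v) by rewrite /inR /= j0 u_mem.
by rewrite /delayed; exact: IH _ _ (tau_le t Rl Rjuv) Rjuv.
Qed.

Lemma bounded_below_dist (X Y : nat -> trip n TU TV -> R) (M : R) :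
  (forall t l, inR U V l -> `|X t l - Y t l| <= M) ->
  bounded_below U V X -> bounded_below U V Y.
Proof.
move=> XY_le [c cX]; exists (c - M) => t l Rl.
exact: le_trans (lerB (cX t l Rl) (lexx M)) (ler_distlBl (XY_le t l Rl)).
Qed.

End AsynchronousIteration.

Theorem lemma4p3 (R : realType) (n : nat) (TU TV : finType)
  (U : 'I_n.+1 -> {set TU}) (V : 'I_n.+1 -> {set TV})
  (HU : forall i : 'I_n.+1, i != ord0 -> U i != set0)
  (HV : forall i : 'I_n.+1, i != ord0 -> V i != set0)
  (nu : 'I_n.+1 -> TV -> R)
  (Hnu0 : forall (s : 'I_n.+1) v, s != ord0 -> v \in V s -> 0 <= nu s v)
  (Hnu1 : forall s : 'I_n.+1, s != ord0 -> \sum_(v in V s) nu s v = 1)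
  (g : trip n TU TV -> 'I_n.+1 -> R)
  (gamma : nat -> trip n TU TV -> R)
  (Hgamma : forall t l, inR U V l -> 0 <= gamma t l <= 1)
  (tau : trip n TU TV -> trip n TU TV -> nat -> nat)
  (Htau : forall l l' t, inR U V l -> inR U V l' -> (tau l l' t <= t)%N)
  (j : nat -> trip n TU TV -> 'I_n.+1)
  (u : nat -> trip n TU TV -> TU)
  (Qhat : nat -> trip n TU TV -> R)
  (Hu : forall t l, inR U V l -> j t l != ord0 ->
     u t l \in U (j t l) /\
     forall u', u' \in U (j t l) ->
       Qbar V nu (delayed Qhat tau l t) (j t l) (u t l)
       <= Qbar V nu (delayed Qhat tau l t) (j t l) u')
  (Hhat : forall t l, inR U V l ->
     Qhat t.+1 l = (1 - gamma t l) * Qhat t l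
       + gamma t l * (g l (j t l) + Qbar V nu (delayed Qhat tau l t) (j t l) (u t l)))
  (t0 : nat) (Qtil : nat -> trip n TU TV -> R)
  (Htil0 : forall t l, (t <= t0)%N -> inR U V l -> Qtil t l = Qtil t0 l)
  (Htil : forall t l, (t0 <= t)%N -> inR U V l ->
     Qtil t.+1 l = (1 - gamma t l) * Qtil t l
       + gamma t l * (g l (j t l) + Qbar V nu (delayed Qtil tau l t) (j t l) (u t l))) :
  bounded_below U V Qhat <-> bounded_below U V Qtil.
Proof.
have u_mem t l Rl j0 : u t l \in U (j t l) := (Hu t l Rl j0).1.
have [M M_ge0 init_le] :=
  ler_norm_sum_initial (fun k l => Qhat k l - Qtil k l) t0.
have dist_le := iterates_dist_le Hnu0 Hnu1 Hgamma Htau u_mem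
  (fun t l _ => Hhat t l) Htil M_ge0 (fun k l k_le _ => init_le k l k_le).
split; apply: bounded_below_dist => t l Rl; first exact: dist_le.
by rewrite distrC; exact: dist_le.
Qed.
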